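(* For positive integers $\ell'\le \ell$, \[ \frac{1}{\ell}\,\mathbb{E}|\mathscr{L}(\mathbf{X}_\ell)| \le \frac{1}{\ell'}\,\mathbb{E}|\mathscr{L}(\mathbf{X}_{\ell'})|. \]
   Context: Let $X_1,X_2,\dots$ be independent random variables with $X_j$ Poisson distributed with parameter $1/j$, and $\mathbf{X}_k=(X_1,\dots,X_k)$. For a finite list $\mathbf{c}=(c_1,\dots,c_k)$ of non-negative integers, $\mathscr{L}(\mathbf{c}) = \{m_1+2m_2+\cdots+km_k : 0\le m_j\le c_j \text{ for } j=1,\dots,k\}$, and $|\cdot|$ denotes cardinality. *)

From HB Require Import structures.
From mathcomp Require Import all_boot all_order all_algebra.
From mathcomp Require Import all_classical all_reals all_analysis.
Set Implicit Arguments. Unset Strict Implicit. Unset Printing Implicit Defensive.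
Import Order.TTheory GRing.Theory Num.Theory.
Local Open Scope ring_scope.

(* A list c = (c_1,...,c_k) of non-negative integers is encoded as
   c : {ffun 'I_k -> nat}, with c_j = c (j-1) for j = 1..k
   (i.e. the ordinal i : 'I_k stands for the index j = i+1). *)

Definition Lbound (k : nat) (c : {ffun 'I_k -> nat}) : nat :=
  (\sum_(i < k) i.+1 * c i)%N.

(* Bound for each m_j (m_j <= c_j <= max c). *)
Definition Lmax (k : nat) (c : {ffun 'I_k -> nat}) : nat :=
  (\max_(i < k) c i).+1.

(* scrL(c) = { m_1 + 2 m_2 + ... + k m_k : 0 <= m_j <= c_j }, as a finite set
   of naturals (all its elements are <= Lbound c, so it lives in 'I_(Lbound c).+1). *)
Definition scrL (k : nat) (c : {ffun 'I_k -> nat}) : {set 'I_(Lbound c).+1} :=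
  [set n : 'I_(Lbound c).+1 |
     [exists m : {ffun 'I_k -> 'I_(Lmax c)},
        [forall i, (m i <= c i)%N] && (nat_of_ord n == \sum_(i < k) i.+1 * m i)%N]].

Definition cardL (k : nat) (c : {ffun 'I_k -> nat}) : nat := #|scrL c|.

(* E |scrL(X_k)| where X_1,...,X_k are independent, X_j ~ Poisson(1/j):
   the expectation of a nonnegative function of a discrete random vector
   whose law is the product of the Poisson(1/j) pmfs. *)
Definition ExpCardL (R : realType) (k : nat) : \bar R :=
  \esum_(c in [set: {ffun 'I_k -> nat}])
     ((\prod_(i < k) poisson_pmf (i.+1%:R^-1 : R) (c i)) * (cardL c)%:R)%:E.

From HB Require Import structures.
From mathcomp Require Import all_boot all_order all_algebra.
From mathcomp Require Import all_classical all_reals all_analysis.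
From mathcomp Require Import ring.
Import Order.TTheory GRing.Theory Num.Theory.
Set Implicit Arguments. Unset Strict Implicit. Unset Printing Implicit Defensive.
Local Open Scope classical_set_scope.
Local Open Scope ring_scope.

(* Every sum m_1 + ... + (k+1) m_(k+1) with m_j <= c_j is a + (k+1) t with a in
   L(c_1,...,c_k) and t <= c_(k+1), so |L(c_1,...,c_(k+1))| <= (c_(k+1) + 1) |L(c_1,...,c_k)|.
   Taking expectations, with X_(k+1) independent of X_1,...,X_k and E(X_(k+1) + 1) = 1 + 1/(k+1),
   gives E|L(X_(k+1))| <= (1 + 1/(k+1)) E|L(X_k)|, and (1 + 1/(k+1))/(k+1) <= 1/k. *)

Section poisson_moments.
Variables (R : realType) (r : R).
Hypothesis r_gt0 : 0 < r.

Lemma nneseries_poisson_pmf : (\sum_(x <oo) (poisson_pmf r x)%:E = 1)%E.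
Proof.
have total_mass : poisson_prob r 0%N [set: nat] = 1%E by apply: probability_setT.
rewrite /poisson_prob r_gt0 in total_mass; rewrite -total_mass.
by rewrite nneseries_esumT // => n; rewrite lee_fin poisson_pmf_ge0.
Qed.

Lemma poisson_pmfS x : poisson_pmf r x.+1 * x.+1%:R = r * poisson_pmf r x.
Proof.
have fact_neq0 : x`!%:R != 0 :> R by rewrite pnatr_eq0 -lt0n fact_gt0.
rewrite /poisson_pmf r_gt0 factS natrM exprS invfM; field.
by rewrite fact_neq0 addrC natr1 pnatr_eq0.
Qed.

Lemma esum_poisson_pmf_succ :
  (\esum_(x in [set: nat]) (poisson_pmf r x * x.+1%:R)%:E = (1 + r)%:E)%E.
Proof.
have pmf_ge0 x : (0 <= (poisson_pmf r x)%:E)%E by rewrite lee_fin poisson_pmf_ge0.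
rewrite -nneseries_esumT; last by move=> x; rewrite lee_fin mulr_ge0 ?poisson_pmf_ge0.
under eq_eseriesr => x _ do rewrite -natr1 mulrDr mulr1 EFinD.
rewrite nneseriesD //; last by move=> x _ _; rewrite lee_fin mulr_ge0 ?poisson_pmf_ge0.
rewrite nneseries_recl //; last by move=> x _; rewrite lee_fin mulr_ge0 ?poisson_pmf_ge0.
rewrite mulr0 add0e -nneseries_addn; last by move=> x; rewrite lee_fin mulr_ge0 ?poisson_pmf_ge0.
under eq_eseriesr => x _ do rewrite addn1 poisson_pmfS EFinM.
by rewrite nneseriesZl // nneseries_poisson_pmf mule1 -EFinD addrC.
Qed.

End poisson_moments.

Lemma esum_mulel_le (R : realType) (T : choiceType) (I : set T)
    (x : \bar R) (a : T -> \bar R) : (0 <= x)%E -> (forall i, 0 <= a i)%E ->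
  (\esum_(i in I) (x * a i) <= x * \esum_(i in I) a i)%E.
Proof.
move=> x_ge0 a_ge0; apply: ge_ereal_sup => _ [A [finA AI] <-] /=.
rewrite -ge0_mule_fsumr //; apply: lee_wpmul2l => //.
by apply: ereal_sup_ubound; exists A.
Qed.

Lemma widen_lift_max k (j : 'I_k) : widen_ord (leqnSn k) j = lift ord_max j.
Proof. by apply: ord_inj; rewrite lift_max. Qed.

Section ffun_snoc.
Variables (T : Type) (k : nat).

Definition ffun_init (c : {ffun 'I_k.+1 -> T}) : {ffun 'I_k -> T} :=
  [ffun j => c (lift ord_max j)].

Definition ffun_snoc (c : {ffun 'I_k -> T}) (x : T) : {ffun 'I_k.+1 -> T} :=
  [ffun i => if unlift ord_max i is Some j then c j else x].

Lemma ffun_snoc_lift c x j : ffun_snoc c x (lift ord_max j) = c j.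
Proof. by rewrite ffunE liftK. Qed.

Lemma ffun_snoc_widen c x j : ffun_snoc c x (widen_ord (leqnSn k) j) = c j.
Proof. by rewrite widen_lift_max ffun_snoc_lift. Qed.

Lemma ffun_snoc_max c x : ffun_snoc c x ord_max = x.
Proof. by rewrite ffunE unlift_none. Qed.

Lemma ffun_snocK c x : ffun_init (ffun_snoc c x) = c.
Proof. by apply/ffunP => j; rewrite ffunE ffun_snoc_lift. Qed.

Lemma ffun_initK c : ffun_snoc (ffun_init c) (c ord_max) = c.
Proof. by apply/ffunP => i; rewrite ffunE; case: unliftP => [j|] ->; rewrite ?ffunE. Qed.

End ffun_snoc.

Lemma esum_ffun_snoc (R : realType) (T : choiceType) k
    (a : {ffun 'I_k.+1 -> T} -> \bar R) : (forall c, 0 <= a c)%E ->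
  (\esum_(c in [set: {ffun 'I_k.+1 -> T}]) a c =
   \esum_(c in [set: {ffun 'I_k -> T}]) \esum_(x in [set: T]) a (ffun_snoc c x))%E.
Proof.
move=> a_ge0; rewrite esum_esum //.
have -> : [set: {ffun 'I_k -> T}] `*`` (fun=> [set: T]) = [set: _ * _].
  by apply/seteqP; split.
apply: (reindex_esum _ _ (fun p => ffun_snoc p.1 p.2)); split => //.
- move=> [c x] [d y] _ _ /= cd.
  have := congr1 (fun f : {ffun _ -> T} => f ord_max) cd; have := congr1 (@ffun_init _ _) cd.
  by rewrite !ffun_snocK !ffun_snoc_max => -> ->.
- by move=> c _; exists (ffun_init c, c ord_max) => //; exact: ffun_initK.
Qed.

Lemma scrLP k (c : {ffun 'I_k -> nat}) (n : 'I_(Lbound c).+1) :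
  reflect (exists2 m : {ffun 'I_k -> nat},
             forall i, (m i <= c i)%N & n = (\sum_(i < k) i.+1 * m i)%N :> nat)
          (n \in scrL c).
Proof.
rewrite inE; apply: (iffP existsP) => [[m /andP[/forallP m_le /eqP nE]]|[m m_le nE]].
  exists [ffun i => val (m i)]; first by move=> i; rewrite ffunE m_le.
  by rewrite nE; apply: eq_bigr => i _; rewrite ffunE.
have m_lt i : (m i < Lmax c)%N by rewrite ltnS (leq_trans (m_le i)) // leq_bigmax.
exists [ffun i => Ordinal (m_lt i)]; apply/andP; split.
  by apply/forallP => i; rewrite ffunE m_le.
by rewrite nE; apply/eqP; apply: eq_bigr => i _; rewrite ffunE.
Qed.

Lemma cardL_snoc_le k (c : {ffun 'I_k -> nat}) (x : nat) :
  (cardL (ffun_snoc c x) <= x.+1 * cardL c)%N.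
Proof.
pose f (p : 'I_(Lbound c).+1 * 'I_x.+1) : 'I_(Lbound (ffun_snoc c x)).+1 :=
  inord (p.1 + k.+1 * p.2)%N.
suff sub_img : scrL (ffun_snoc c x) \subset f @: finset.setX (scrL c) [set: 'I_x.+1].
  rewrite /cardL (leq_trans (subset_leq_card sub_img)) // (leq_trans (leq_imset_card _ _)) //.
  by rewrite finset.cardsX finset.cardsT card_ord mulnC.
apply/fintype.subsetP => n /scrLP[m m_le nE].
rewrite big_ord_recr /= in nE.
pose a := (\sum_(j < k) j.+1 * ffun_init m j)%N.
have aE : (\sum_(j < k) j.+1 * m (widen_ord (leqnSn k) j))%N = a.
  by apply: eq_bigr => j _; rewrite ffunE widen_lift_max.
have init_le j : (ffun_init m j <= c j)%N by rewrite ffunE -(ffun_snoc_lift c x) m_le.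
have a_lt : (a < (Lbound c).+1)%N.
  by rewrite ltnS; apply: leq_sum => j _; rewrite leq_mul2l init_le orbT.
have t_lt : (m ord_max < x.+1)%N by rewrite ltnS -[leqRHS](ffun_snoc_max c x) m_le.
apply/imsetP; exists (Ordinal a_lt, Ordinal t_lt).
  by rewrite finset.in_setX finset.in_setT andbT; apply/scrLP; exists (ffun_init m).
have n_lt : (a + k.+1 * m ord_max < (Lbound (ffun_snoc c x)).+1)%N by rewrite -aE -nE.
by apply: ord_inj; rewrite /= inordK // nE aE.
Qed.

Definition poisson_vec_pmf (R : realType) k (c : {ffun 'I_k -> nat}) : R :=
  \prod_(i < k) poisson_pmf (i.+1%:R^-1 : R) (c i).

Lemma poisson_vec_pmf_ge0 (R : realType) k (c : {ffun 'I_k -> nat}) :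
  0 <= poisson_vec_pmf R c.
Proof. by apply: prodr_ge0 => i _; apply: poisson_pmf_ge0. Qed.

Lemma poisson_vec_pmf_snoc (R : realType) k (c : {ffun 'I_k -> nat}) x :
  poisson_vec_pmf R (ffun_snoc c x) =
  poisson_vec_pmf R c * poisson_pmf (k.+1%:R^-1 : R) x.
Proof.
rewrite /poisson_vec_pmf big_ord_recr /= ffun_snoc_max.
by under eq_bigr do rewrite ffun_snoc_widen.
Qed.

Lemma ExpCardLE (R : realType) k : ExpCardL R k =
  (\esum_(c in [set: {ffun 'I_k -> nat}]) (poisson_vec_pmf R c * (cardL c)%:R)%:E)%E.
Proof. by []. Qed.

Lemma ExpCardL_ge0 (R : realType) k : (0 <= ExpCardL R k)%E.
Proof.
by rewrite ExpCardLE; apply: esum_ge0 => c _; rewrite lee_fin mulr_ge0 ?poisson_vec_pmf_ge0.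
Qed.

Lemma ExpCardL_succ_le (R : realType) k :
  (ExpCardL R k.+1 <= (1 + k.+1%:R^-1 : R)%:E * ExpCardL R k)%E.
Proof.
set r : R := k.+1%:R^-1; have r_gt0 : 0 < r by rewrite invr_gt0 ltr0Sn.
have summand_ge0 n (c : {ffun 'I_n -> nat}) :
    (0 <= (poisson_vec_pmf R c * (cardL c)%:R)%:E)%E.
  by rewrite lee_fin mulr_ge0 ?poisson_vec_pmf_ge0.
rewrite !ExpCardLE esum_ffun_snoc //.
apply: le_trans (esum_mulel_le _ _ _); last 2 first.
- by rewrite lee_fin addr_ge0 ?ltW.
- by move=> c; apply: summand_ge0.
apply: le_esum => c _; rewrite muleC -(esum_poisson_pmf_succ r_gt0).
apply: le_trans (esum_mulel_le _ _ _); last 2 first.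
- exact: summand_ge0.
- by move=> x; rewrite lee_fin mulr_ge0 ?poisson_pmf_ge0.
apply: le_esum => x _; rewrite -EFinM lee_fin poisson_vec_pmf_snoc.
have -> : poisson_vec_pmf R c * (cardL c)%:R * (poisson_pmf r x * x.+1%:R) =
    poisson_vec_pmf R c * poisson_pmf r x * (x.+1 * cardL c)%N%:R.
  by rewrite natrM; ring.
by rewrite ler_wpM2l ?ler_nat ?cardL_snoc_le // mulr_ge0 ?poisson_vec_pmf_ge0 ?poisson_pmf_ge0.
Qed.

Lemma inv_succ_mul_le (R : realFieldType) n : (0 < n)%N ->
  (n.+1%:R^-1 : R) * (1 + n.+1%:R^-1) <= n%:R^-1.
Proof.
move=> n_gt0; have n_pos : (0 : R) < n%:R by rewrite ltr0n.
rewrite -natr1 -subr_ge0.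
have -> : n%:R^-1 - (n%:R + 1)^-1 * (1 + (n%:R + 1)^-1) = (n%:R * (n%:R + 1) ^+ 2)^-1 :> R.
  by field; rewrite !gt_eqF // ltr_wpDr.
by rewrite invr_ge0 mulr_ge0 ?exprn_ge0 ?addr_ge0 ?ltW.
Qed.

Lemma ExpCardL_scaled_succ_le (R : realType) k : (0 < k)%N ->
  ((k.+1%:R^-1 : R)%:E * ExpCardL R k.+1 <= (k%:R^-1 : R)%:E * ExpCardL R k)%E.
Proof.
move=> k_gt0; apply: le_trans (_ : _ <= (k.+1%:R^-1 : R)%:E *
    ((1 + k.+1%:R^-1 : R)%:E * ExpCardL R k))%E _.
  by rewrite lee_wpmul2l ?ExpCardL_succ_le // lee_fin invr_ge0 ler0n.
by rewrite muleA -EFinM lee_wpmul2r ?ExpCardL_ge0 // lee_fin inv_succ_mul_le.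
Qed.

Theorem lemma3p2 (R : realType) (l' l : nat) :
  (0 < l')%N -> (l' <= l)%N ->
  ((l%:R^-1 : R)%:E * ExpCardL R l <= (l'%:R^-1 : R)%:E * ExpCardL R l')%E.
Proof.
move=> l'_gt0 /subnKC <-; elim: (l - l')%N => [|d IH]; first by rewrite addn0.
apply: le_trans IH; rewrite addnS.
by apply: ExpCardL_scaled_succ_le; rewrite addn_gt0 l'_gt0.
Qed.
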